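(* For the $3\times3$ absorbing game \[ A=\begin{bmatrix}1^* & 1^* & 2^*\\ 1^* & 2^* & 0\\ 2^* & 0 & 1^*\end{bmatrix}, \] let \[ \alpha=-1+\frac13\sqrt[3]{\frac{27}{2}-\frac{3\sqrt{69}}{2}}+\frac{\sqrt[3]{\tfrac12(9+\sqrt{69})}}{\sqrt[3]{9}}\approx0.3247, \] and let $x=(x^1,x^2,x^3)=(\alpha,\,1-2\alpha-\alpha^2,\,\alpha+\alpha^2)\in\Delta(\{1,2,3\})$. Then $x$ is the unique $x\in\Delta(\{1,2,3\})$ satisfying \[ x^1+x^2+2x^3=\frac{x^1+2x^2}{x^1+x^2}=\frac{2x^1+x^3}{x^1+x^3}, \] and for every column $j\in\{1,2,3\}$, $\lim_{\lambda\to0}\gamma_\lambda(x,j)=1+\alpha+\alpha^2$, where $\gamma_\lambda(x,j)$ is the $\lambda$-discounted payoff when Player 1 plays the stationary strategy $x$ and Player 2 plays the pure stationary action $j$. Consequently the limit value is $v=1+\alpha+\alpha^2$. *)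

From Stdlib Require Export Reals Lra.
From Coquelicot Require Export Coquelicot.
Open Scope R_scope.

(* The 3x3 absorbing game A (indices 0,1,2 stand for rows/columns 1,2,3).
   absorbing i j = true iff entry (i,j) is starred (absorbing);
   payoff i j = the entry: absorbing payoff if starred, stage payoff otherwise. *)
Definition absorbing (i j : nat) : bool :=
  match i, j with
  | 1%nat, 2%nat | 2%nat, 1%nat => false
  | _, _ => true
  end.

Definition payoff (i j : nat) : R :=
  match i, j with
  | 0%nat, 0%nat => 1 | 0%nat, 1%nat => 1 | 0%nat, 2%nat => 2
  | 1%nat, 0%nat => 1 | 1%nat, 1%nat => 2 | 1%nat, 2%nat => 0
  | 2%nat, 0%nat => 2 | 2%nat, 1%nat => 0 | 2%nat, 2%nat => 1
  | _, _ => 0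
  end.

Definition a_ind (i j : nat) : R := if absorbing i j then 1 else 0.

(* A stationary strategy of either player is a mixed action over {0,1,2},
   represented by a function nat -> R; only components 0,1,2 matter. *)
Definition in_simplex (x : nat -> R) : Prop :=
  0 <= x 0%nat /\ 0 <= x 1%nat /\ 0 <= x 2%nat /\ x 0%nat + x 1%nat + x 2%nat = 1.

Definition pure (j : nat) : nat -> R := fun i => if Nat.eqb i j then 1 else 0.

Definition sum3x3 (f : nat -> nat -> R) : R :=
  sum_f_R0 (fun i => sum_f_R0 (fun j => f i j) 2) 2.

Definition pabs (x y : nat -> R) : R := sum3x3 (fun i j => x i * y j * a_ind i j).
Definition Aabs (x y : nat -> R) : R :=
  sum3x3 (fun i j => x i * y j * a_ind i j * payoff i j).
Definition Nnon (x y : nat -> R) : R :=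
  sum3x3 (fun i j => x i * y j * (1 - a_ind i j) * payoff i j).

(* Expected payoff at stage n+1 under stationary (x,y): the play is still in
   the non-absorbing state at stage s+1 with prob q^s (q = 1 - pabs); an
   absorption at stage s+1 yields payoff Aabs-mass forever after. *)
Definition stage_payoff (x y : nat -> R) (n : nat) : R :=
  sum_f_R0 (fun s => (1 - pabs x y) ^ s * Aabs x y) n
  + (1 - pabs x y) ^ n * Nnon x y.

Definition gamma (lam : R) (x y : nat -> R) : R :=
  Series (fun n => lam * (1 - lam) ^ n * stage_payoff x y n).

(* v is the value of the lambda-discounted game (stationary strategies
   suffice in discounted stochastic games, Shapley). *)
Definition is_disc_value (lam v : R) : Prop :=
  (exists x, in_simplex x /\ forall y, in_simplex y -> v <= gamma lam x y) /\
  (exists y, in_simplex y /\ forall x, in_simplex x -> gamma lam x y <= v).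

Definition cbrt (z : R) : R := Rpower z (1/3).

Definition alpha : R :=
  -1 + (1/3) * cbrt (27/2 - 3 * sqrt 69 / 2) + cbrt ((9 + sqrt 69) / 2) / cbrt 9.

Definition char_eqs (x : nat -> R) : Prop :=
  x 0%nat + x 1%nat + 2 * x 2%nat = (x 0%nat + 2 * x 1%nat) / (x 0%nat + x 1%nat) /\
  (x 0%nat + 2 * x 1%nat) / (x 0%nat + x 1%nat)
    = (2 * x 0%nat + x 2%nat) / (x 0%nat + x 2%nat).

Definition xstar : nat -> R := fun i =>
  match i with
  | 0%nat => alpha
  | 1%nat => 1 - 2 * alpha - alpha ^ 2
  | 2%nat => alpha + alpha ^ 2
  | _ => 0
  end.

From Stdlib Require Import Reals Lra Lia.
From Coquelicot Require Import Coquelicot.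
Open Scope R_scope.

(* The non-absorbing entries of A pay 0, so a stationary pair with absorption
   probability p > 0 and absorbing payoff mass A has lambda-discounted payoff
   A / (lambda + (1 - lambda) p).  The three equations say that x equalizes the
   columns: A(x, y) = v p(x, y) for every y, with v = 1 + alpha + alpha^2; they
   hold because 1 + alpha is the plastic number, the real root of t^3 = t + 1
   given by Cardano's formula.  As moreover p(x, y) >= alpha, the payoff of x
   against any y lies in [v - v lambda / alpha, v], and since A is symmetric
   both players can guarantee this, which squeezes the discounted values to v.
   On the simplex the equations force x^3 to be a root of the strictly
   increasing cubic r^3 - 2 r^2 + 3 r - 1, whence uniqueness. *)

Lemma pabs_expand x y : pabs x y =
  x 0%nat * y 0%nat + x 0%nat * y 1%nat + x 0%nat * y 2%nat
  + x 1%nat * y 0%nat + x 1%nat * y 1%nat + x 2%nat * y 0%nat + x 2%nat * y 2%nat.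
Proof. unfold pabs, sum3x3, a_ind, absorbing; simpl; ring. Qed.

Lemma Aabs_expand x y : Aabs x y =
  x 0%nat * y 0%nat + x 0%nat * y 1%nat + 2 * x 0%nat * y 2%nat
  + x 1%nat * y 0%nat + 2 * x 1%nat * y 1%nat + 2 * x 2%nat * y 0%nat + x 2%nat * y 2%nat.
Proof. unfold Aabs, sum3x3, a_ind, absorbing, payoff; simpl; ring. Qed.

Lemma Nnon_eq0 x y : Nnon x y = 0.
Proof. unfold Nnon, sum3x3, a_ind, absorbing, payoff; simpl; ring. Qed.

Lemma pabs_sym x y : pabs x y = pabs y x.
Proof. rewrite !pabs_expand; ring. Qed.

Lemma Aabs_sym x y : Aabs x y = Aabs y x.
Proof. rewrite !Aabs_expand; ring. Qed.

Lemma pabs_le1 x y : in_simplex x -> in_simplex y -> pabs x y <= 1.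
Proof.
  intros (Hx0 & Hx1 & Hx2 & Hx) (Hy0 & Hy1 & Hy2 & Hy).
  rewrite pabs_expand.
  replace 1 with ((x 0%nat + x 1%nat + x 2%nat) * (y 0%nat + y 1%nat + y 2%nat))
    by (rewrite Hx, Hy; ring).
  nra.
Qed.

Lemma pure_simplex j : (j < 3)%nat -> in_simplex (pure j).
Proof.
  intros Hj. unfold in_simplex, pure.
  destruct j as [|[|[|j]]]; simpl; try lia; repeat split; lra.
Qed.

Lemma stage_payoff_closed x y n : 0 < pabs x y ->
  stage_payoff x y n =
  Aabs x y / pabs x y * (1 - (1 - pabs x y) ^ S n) + (1 - pabs x y) ^ n * Nnon x y.
Proof.
  intros Hp. unfold stage_payoff.
  rewrite <- scal_sum, tech3 by (intro; lra).
  field; lra.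
Qed.

Lemma is_series_geom_scal c q : Rabs q < 1 ->
  is_series (fun n => c * q ^ n) (c / (1 - q)).
Proof. intros Hq. exact (is_series_scal_l c _ _ (is_series_geom q Hq)). Qed.

Lemma gamma_closed lam x y : 0 < lam <= 1 -> 0 < pabs x y <= 1 ->
  gamma lam x y = (Aabs x y + lam * Nnon x y) / (lam + (1 - lam) * pabs x y).
Proof.
  intros Hlam Hp. unfold gamma.
  set (A := Aabs x y); set (N := Nnon x y); set (p := pabs x y) in *.
  apply is_series_unique.
  (* By stage_payoff_closed, the n-th term combines the geometric sequences
     (1 - lam)^n and ((1 - lam) (1 - p))^n. *)
  assert (Hr1 : Rabs (1 - lam) < 1) by (apply Rabs_def1; lra).
  assert (Hr2 : Rabs ((1 - lam) * (1 - p)) < 1) by (apply Rabs_def1; nra).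
  pose proof (is_series_plus _ _ _ _ (is_series_geom_scal (A / p * lam) _ Hr1)
    (is_series_geom_scal (lam * (N - A / p * (1 - p))) _ Hr2)) as Hsum.
  unfold plus in Hsum; simpl in Hsum.
  replace ((A + lam * N) / (lam + (1 - lam) * p)) with
    (A / p * lam / (1 - (1 - lam)) + lam * (N - A / p * (1 - p)) / (1 - (1 - lam) * (1 - p)))
    by (field; nra).
  refine (is_series_ext _ _ _ _ Hsum); intros n.
  rewrite stage_payoff_closed by (fold p; lra); fold A N p.
  rewrite Rpow_mult_distr; simpl; ring.
Qed.

Lemma gamma_eq lam x y : 0 < lam <= 1 -> 0 < pabs x y <= 1 ->
  gamma lam x y = Aabs x y / (lam + (1 - lam) * pabs x y).
Proof. intros Hlam Hp. rewrite gamma_closed, Nnon_eq0 by easy. f_equal; ring. Qed.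

Lemma gamma_sym lam x y : gamma lam x y = gamma lam y x.
Proof. unfold gamma, stage_payoff. rewrite pabs_sym, Aabs_sym, !Nnon_eq0. easy. Qed.

Lemma absorbed_payoff_bounds v a p lam : 0 <= v -> 0 < a <= p -> p <= 1 -> 0 < lam <= 1 ->
  v - v / a * lam <= v * p / (lam + (1 - lam) * p) <= v.
Proof.
  intros Hv Ha Hp Hlam.
  set (D := lam + (1 - lam) * p).
  assert (HpD : p <= D) by (unfold D; nra).
  assert (Hq : v * p / D * D = v * p) by (field; lra).
  set (q := v * p / D) in *.
  assert (Hqv : q <= v) by nra.
  split; [|exact Hqv].
  assert (Hgap : (v - q) * D = v * lam * (1 - p)) by (unfold D in *; nra).
  assert (HaD : a * (v - q) <= D * (v - q)) by (apply Rmult_le_compat_r; lra).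
  assert (Hvlp : 0 <= v * lam * p) by (apply Rmult_le_pos; [apply Rmult_le_pos|]; lra).
  assert (Hdiff : v - q <= v * lam / a).
  { apply Rmult_le_reg_r with a; [lra|].
    replace (v * lam / a * a) with (v * lam) by (field; lra).
    nra. }
  replace (v / a * lam) with (v * lam / a) by (field; lra).
  lra.
Qed.

Lemma filterlim_at_right_squeeze (f : R -> R) (l c : R) :
  (forall lam, 0 < lam <= 1 -> l - c * lam <= f lam <= l) ->
  filterlim f (at_right 0) (locally l).
Proof.
  intros Hf.
  assert (Hnear : at_right 0 (fun lam => l - c * lam <= f lam <= l)).
  { exists (mkposreal 1 Rlt_0_1); intros lam Hlam Hpos; apply Hf; split; [easy|].
    apply Rabs_lt_between' in Hlam; simpl in Hlam. lra. }
  apply (filterlim_le_le (fun lam => l - c * lam) f (fun _ => l) l Hnear).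
  - replace (Finite l) with (Finite (l - c * 0)) by (f_equal; ring).
    apply (filterlim_filter_le_1 (F := locally 0)); [apply filter_le_within|].
    apply (ex_derive_continuous (fun lam => l - c * lam)); auto_derive; trivial.
  - apply filterlim_const.
Qed.

Lemma cbrt_pos z : 0 < cbrt z.
Proof. apply exp_pos. Qed.

Lemma cbrt_cube z : 0 < z -> cbrt z ^ 3 = z.
Proof.
  intros Hz. unfold cbrt.
  rewrite <- Rpower_pow, Rpower_mult by apply exp_pos.
  replace (1 / 3 * INR 3) with 1 by (simpl; field).
  exact (Rpower_1 z Hz).
Qed.

Lemma cube_inj_pos a b : 0 < a -> 0 < b -> a ^ 3 = b ^ 3 -> a = b.
Proof.
  intros Ha Hb Hab.
  assert (Hfac : (a - b) * (a ^ 2 + a * b + b ^ 2) = 0)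
    by (replace ((a - b) * (a ^ 2 + a * b + b ^ 2)) with (a ^ 3 - b ^ 3) by ring; lra).
  apply Rmult_integral in Hfac as [Hfac | Hfac]; nra.
Qed.

Lemma cardano u w : u ^ 3 + w ^ 3 = 1 -> u * w = 1 / 3 -> (u + w) ^ 3 = (u + w) + 1.
Proof.
  intros Hsum Hprod.
  replace ((u + w) ^ 3) with (u ^ 3 + w ^ 3 + 3 * (u * w) * (u + w)) by ring.
  rewrite Hsum, Hprod; field.
Qed.

Lemma plastic_alpha : 0 < 1 + alpha /\ (1 + alpha) ^ 3 = (1 + alpha) + 1.
Proof.
  set (s := sqrt 69).
  assert (Hs0 : 0 <= s) by apply sqrt_pos.
  assert (Hs2 : s * s = 69) by (apply sqrt_sqrt; lra).
  assert (Hs9 : s < 9) by nra.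
  set (u := 1 / 3 * cbrt (27 / 2 - 3 * s / 2)).
  set (w := cbrt ((9 + s) / 2) / cbrt 9).
  assert (Hu : 0 < u) by (unfold u; pose proof (cbrt_pos (27 / 2 - 3 * s / 2)); lra).
  assert (Hw : 0 < w) by (apply Rdiv_lt_0_compat; apply cbrt_pos).
  assert (Hu3 : u ^ 3 = (9 - s) / 18).
  { unfold u. rewrite Rpow_mult_distr, cbrt_cube by lra. field. }
  assert (Hw3 : w ^ 3 = (9 + s) / 18).
  { unfold w, Rdiv at 1. rewrite Rpow_mult_distr, pow_inv, !cbrt_cube by lra. field. }
  assert (Huw : u * w = 1 / 3).
  { apply cube_inj_pos; [nra | lra |].
    rewrite Rpow_mult_distr, Hu3, Hw3. field_simplify. nra. }
  replace (1 + alpha) with (u + w) by (unfold alpha, u, w, s; ring).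
  split; [lra|].
  apply cardano; [rewrite Hu3, Hw3; field | exact Huw].
Qed.

Lemma alpha_cubic : alpha ^ 3 + 3 * alpha ^ 2 + 2 * alpha - 1 = 0.
Proof. destruct plastic_alpha as [_ Hrho]. lra. Qed.

Lemma alpha_bounds : 0 < alpha < 1 / 3.
Proof. destruct plastic_alpha as [Hpos Hrho]. split; nra. Qed.

Definition limit_value : R := 1 + alpha + alpha ^ 2.

Lemma limit_value_pos : 0 < limit_value.
Proof. pose proof alpha_bounds. unfold limit_value. nra. Qed.

Lemma xstar_simplex : in_simplex xstar.
Proof. pose proof alpha_bounds. unfold in_simplex; simpl. repeat split; nra. Qed.

Lemma xstar_equalizing :
  xstar 0%nat + xstar 1%nat + 2 * xstar 2%nat
    = limit_value * (xstar 0%nat + xstar 1%nat + xstar 2%nat) /\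
  xstar 0%nat + 2 * xstar 1%nat = limit_value * (xstar 0%nat + xstar 1%nat) /\
  2 * xstar 0%nat + xstar 2%nat = limit_value * (xstar 0%nat + xstar 2%nat).
Proof. pose proof alpha_cubic. unfold limit_value; simpl. repeat split; nra. Qed.

Lemma Aabs_xstar y : Aabs xstar y = limit_value * pabs xstar y.
Proof.
  destruct xstar_equalizing as (E0 & E1 & E2).
  rewrite Aabs_expand, pabs_expand.
  transitivity (y 0%nat * (xstar 0%nat + xstar 1%nat + 2 * xstar 2%nat)
    + y 1%nat * (xstar 0%nat + 2 * xstar 1%nat) + y 2%nat * (2 * xstar 0%nat + xstar 2%nat));
    [ring|].
  rewrite E0, E1, E2; ring.
Qed.

Lemma pabs_xstar_bounds y : in_simplex y -> alpha <= pabs xstar y <= 1.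
Proof.
  intros Hy. split; [|exact (pabs_le1 _ _ xstar_simplex Hy)].
  destruct Hy as (Hy0 & Hy1 & Hy2 & Hsum). pose proof alpha_bounds.
  rewrite pabs_expand; simpl. nra.
Qed.

Lemma gamma_xstar_bounds lam y : 0 < lam <= 1 -> in_simplex y ->
  limit_value - limit_value / alpha * lam <= gamma lam xstar y <= limit_value.
Proof.
  intros Hlam Hy.
  pose proof (pabs_xstar_bounds y Hy) as Hp. pose proof alpha_bounds.
  rewrite gamma_eq, Aabs_xstar by lra.
  apply absorbed_payoff_bounds; [left; apply limit_value_pos | lra | lra | exact Hlam].
Qed.

Lemma disc_value_bounds lam w : 0 < lam <= 1 -> is_disc_value lam w ->
  limit_value - limit_value / alpha * lam <= w <= limit_value.
Proof.
  intros Hlam [[x [Hx Hxw]] [y [Hy Hyw]]].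
  pose proof (gamma_xstar_bounds lam x Hlam Hx) as Hgx.
  pose proof (gamma_xstar_bounds lam y Hlam Hy) as Hgy.
  specialize (Hxw xstar xstar_simplex). specialize (Hyw xstar xstar_simplex).
  (* The game is symmetric, so xstar guarantees the same bounds to player 2. *)
  rewrite gamma_sym in Hxw.
  lra.
Qed.

Lemma char_eqs_xstar : char_eqs xstar.
Proof.
  destruct xstar_equalizing as (E0 & E1 & E2).
  destruct xstar_simplex as (_ & _ & _ & Hsum).
  pose proof alpha_bounds.
  assert (H01 : 0 < xstar 0%nat + xstar 1%nat) by (simpl; nra).
  assert (H02 : 0 < xstar 0%nat + xstar 2%nat) by (simpl; nra).
  unfold char_eqs. rewrite E0, E1, E2, Hsum.
  split; field; lra.
Qed.

Lemma char_eqs_simplex y : in_simplex y -> char_eqs y ->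
  y 2%nat * (y 0%nat + y 1%nat) = y 1%nat /\ y 2%nat * (y 0%nat + y 2%nat) = y 0%nat.
Proof.
  intros (H0 & H1 & H2 & Hsum) [E1 E2]. rewrite <- E1 in E2.
  set (p := y 0%nat) in *; set (q := y 1%nat) in *; set (r := y 2%nat) in *.
  (* A zero denominator turns a right-hand side into the junk value 0,
     whereas the left-hand side p + q + 2 r is at least 1. *)
  assert (Hpq : p + q <> 0).
  { intros Z. rewrite Z, Rdiv_0_r in E1. lra. }
  assert (Hpr : p + r <> 0).
  { intros Z. rewrite Z, Rdiv_0_r in E2. lra. }
  apply (f_equal (fun z => z * (p + q))) in E1.
  apply (f_equal (fun z => z * (p + r))) in E2.
  field_simplify in E1; [|exact Hpq]. field_simplify in E2; [|exact Hpr].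
  split; nra.
Qed.

Lemma cubic_root_unique r s :
  r ^ 3 - 2 * r ^ 2 + 3 * r - 1 = 0 -> s ^ 3 - 2 * s ^ 2 + 3 * s - 1 = 0 -> r = s.
Proof.
  intros Hr Hs.
  assert (Hfac : (r - s) * (r ^ 2 + r * s + s ^ 2 - 2 * (r + s) + 3) = 0)
    by (replace ((r - s) * _) with ((r ^ 3 - 2 * r ^ 2 + 3 * r - 1) - (s ^ 3 - 2 * s ^ 2 + 3 * s - 1))
          by ring; lra).
  apply Rmult_integral in Hfac as [Hfac | Hfac]; nra.
Qed.

Lemma char_eqs_unique y : in_simplex y -> char_eqs y ->
  y 0%nat = xstar 0%nat /\ y 1%nat = xstar 1%nat /\ y 2%nat = xstar 2%nat.
Proof.
  intros Hy Hc.
  destruct (char_eqs_simplex y Hy Hc) as [Eq Ep].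
  destruct Hy as (_ & _ & _ & Hsum).
  pose proof alpha_cubic as Ha.
  assert (Hq : y 1%nat = y 2%nat - y 2%nat ^ 2) by nra.
  assert (Hp : y 0%nat = y 2%nat * (1 - y 1%nat)) by nra.
  assert (Hr : y 2%nat = xstar 2%nat).
  { apply cubic_root_unique; change (xstar 2%nat) with (alpha + alpha ^ 2).
    - rewrite Hp, Hq in Hsum. lra.
    - replace ((alpha + alpha ^ 2) ^ 3 - 2 * (alpha + alpha ^ 2) ^ 2 + 3 * (alpha + alpha ^ 2) - 1)
        with ((alpha ^ 3 - alpha + 1) * (alpha ^ 3 + 3 * alpha ^ 2 + 2 * alpha - 1)) by ring.
      rewrite Ha; ring. }
  assert (Hq' : y 1%nat = xstar 1%nat).
  { rewrite Hq, Hr; change (xstar 1%nat) with (1 - 2 * alpha - alpha ^ 2);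
    change (xstar 2%nat) with (alpha + alpha ^ 2).
    replace (alpha + alpha ^ 2 - (alpha + alpha ^ 2) ^ 2) with
      (1 - 2 * alpha - alpha ^ 2 + (1 - alpha) * (alpha ^ 3 + 3 * alpha ^ 2 + 2 * alpha - 1)) by ring.
    rewrite Ha; ring. }
  repeat split; [|exact Hq' | exact Hr].
  destruct xstar_simplex as (_ & _ & _ & Hxsum). lra.
Qed.

Theorem mainTheorem5 :
  (* x is in the simplex and satisfies the equations *)
  (in_simplex xstar /\ char_eqs xstar) /\
  (* uniqueness *)
  (forall y : nat -> R, in_simplex y -> char_eqs y ->
     y 0%nat = xstar 0%nat /\ y 1%nat = xstar 1%nat /\ y 2%nat = xstar 2%nat) /\
  (* limits of discounted payoffs against each pure column *)
  (forall j : nat, (j < 3)%nat ->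
     filterlim (fun lam => gamma lam xstar (pure j)) (at_right 0)
               (locally (1 + alpha + alpha ^ 2))) /\
  (* limit value *)
  (forall v : R -> R, (forall lam, 0 < lam <= 1 -> is_disc_value lam (v lam)) ->
     filterlim v (at_right 0) (locally (1 + alpha + alpha ^ 2))).
Proof.
  fold limit_value.
  split; [split; [exact xstar_simplex | exact char_eqs_xstar]|].
  split; [exact char_eqs_unique|].
  split.
  - intros j Hj. apply (filterlim_at_right_squeeze _ _ (limit_value / alpha)).
    intros lam Hlam. exact (gamma_xstar_bounds lam _ Hlam (pure_simplex j Hj)).
  - intros v Hv. apply (filterlim_at_right_squeeze _ _ (limit_value / alpha)).
    intros lam Hlam. exact (disc_value_bounds lam _ Hlam (Hv lam Hlam)).
Qed.
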